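(* For $A,x\in\mathbb{R}$ define $E_0(A,x):=1$, $E_1(A,x):=e^{(1-x)A}$ and, for $n\ge2$, \[ E_n(A,x):=\begin{cases} \exp\!\Big(\big[x(E_1+E_3+\cdots+E_{n-1})-\tfrac n2\big]A\Big), & n \text{ even},\\[4pt] \exp\!\Big(\big[\tfrac{n+1}{2}-x(E_0+E_2+\cdots+E_{n-1})\big]A\Big), & n\text{ odd},\end{cases} \] with all $E_j$ evaluated at $(A,x)$. Define $\varphi_1(A,x):=x-1$, $\varphi_n(A,x):=\varphi_{n-1}(A,x)-1+xE_{n-1}(A,x)$ for $n\ge2$, and the polynomial $p_n(A):=\frac{\partial\varphi_n}{\partial x}(A,1)$. Then for every even $n\ge3$, \[ \frac{p_n(A)}{2-A}=p_{n-1}(A)-\frac{p_{n-2}(A)}{2-A}, \] and for every odd $n\ge3$, \[ \frac{p_n(A)}{2+A}=p_{n-1}(A)-\frac{p_{n-2}(A)}{2+A}. \] Equivalently, $p_n(A)=[2-(-1)^nA]\,p_{n-1}(A)-p_{n-2}(A)$ for all $n\ge3$. *)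

From Stdlib Require Import Reals.
From Coquelicot Require Import Coquelicot.
Open Scope R_scope.

(* Etriple A x n = (E_n(A,x), Sodd_n, Seven_n) where
   Sodd_n  = sum of E_j(A,x) over odd  j <= n,
   Seven_n = sum of E_j(A,x) over even j <= n. *)
Fixpoint Etriple (A x : R) (n : nat) : R * R * R :=
  match n with
  | O => (1, 0, 1)
  | S m =>
      let '(_, so, se) := Etriple A x m in
      let en :=
        match m with
        | O => exp ((1 - x) * A)
        | _ => if Nat.even n
               then exp ((x * so - INR n / 2) * A)
               else exp (((INR n + 1) / 2 - x * se) * A)
        end in
      if Nat.even n then (en, so, se + en) else (en, so + en, se)
  end.

Definition E (n : nat) (A x : R) : R := fst (fst (Etriple A x n)).

(* phi_1 = x - 1, phi_n = phi_{n-1} - 1 + x E_{n-1} for n >= 2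
   (phi_0 is not used by the paper; set to 0). *)
Fixpoint phi (n : nat) (A x : R) : R :=
  match n with
  | O => 0
  | S O => x - 1
  | S m => phi m A x - 1 + x * E m A x
  end.

Definition p (n : nat) (A : R) : R := Derive (fun x => phi n A x) 1.

(* At x = 1 every exponent in the definition of E_n vanishes, because the odd
   and even partial sums then just count indices; so E_n(A,1) = 1.  Writing
   e_n for dE_n/dx at x = 1 and differentiating the recursion there gives
   e_n = A (n/2 + sum of the odd e_j, j < n) for n even and
   e_n = -A ((n+1)/2 + sum of the even e_j, j < n) for n odd, while
   p_n = n + e_1 + ... + e_(n-1).  Hence e_n - e_(n-1) = (-1)^n A p_n, and
   comparing p_n - p_(n-1) = 1 + e_(n-1) with the same identity one step
   earlier yields
   p_n = (2 - (-1)^n A) p_(n-1) - p_(n-2). *)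
From Stdlib Require Import Reals Lra Lia.
From Coquelicot Require Import Coquelicot.
Open Scope R_scope.

Definition Sodd (n : nat) (A x : R) : R := snd (fst (Etriple A x n)).
Definition Seven (n : nat) (A x : R) : R := snd (Etriple A x n).

Lemma even_S_negb (n : nat) : Nat.even (S n) = negb (Nat.even n).
Proof. now rewrite Nat.even_succ, <- Nat.negb_even. Qed.

Lemma pow_m1_even (n : nat) : (-1) ^ n = if Nat.even n then 1 else -1.
Proof.
  induction n as [|n IH]; [reflexivity|].
  rewrite <- tech_pow_Rmult, IH, even_S_negb.
  destruct (Nat.even n); simpl; ring.
Qed.

Section Etriple_step.
Variables (A x : R) (m : nat).

(* E_1 = exp((1-x)A) is the odd case of the general formula since Seven 0 = 1. *)
Lemma E_S : E (S m) A x =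
  if Nat.even (S m) then exp ((x * Sodd m A x - INR (S m) / 2) * A)
  else exp (((INR (S m) + 1) / 2 - x * Seven m A x) * A).
Proof.
  unfold E, Sodd, Seven; cbn [Etriple].
  destruct m as [|k].
  - simpl; f_equal; field.
  - destruct (Etriple A x (S k)) as [[e so] se].
    destruct (Nat.even (S (S k))); reflexivity.
Qed.

Lemma Sodd_S : Sodd (S m) A x =
  if Nat.even (S m) then Sodd m A x else Sodd m A x + E (S m) A x.
Proof.
  unfold E, Sodd; cbn [Etriple].
  destruct (Etriple A x m) as [[e so] se].
  destruct (Nat.even (S m)); reflexivity.
Qed.

Lemma Seven_S : Seven (S m) A x =
  if Nat.even (S m) then Seven m A x + E (S m) A x else Seven m A x.
Proof.
  unfold E, Seven; cbn [Etriple].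
  destruct (Etriple A x m) as [[e so] se].
  destruct (Nat.even (S m)); reflexivity.
Qed.

End Etriple_step.

Lemma is_derive_exp_root (g : R -> R) (x l : R) :
  g x = 0 -> is_derive g x l -> is_derive (fun y => exp (g y)) x l.
Proof.
  intros Hroot Hg.
  pose proof (is_derive_comp exp g x _ _ (is_derive_exp (g x)) Hg) as H.
  rewrite Hroot, exp_0 in H.
  replace l with (scal l 1) by apply Rmult_1_r.
  exact H.
Qed.

Section Derivatives.
Variable A : R.

Lemma E_S_at_1 (m : nat) :
  Sodd m A 1 + Seven m A 1 = INR m + 1 ->
  Seven m A 1 - Sodd m A 1 = (if Nat.even m then 1 else 0) ->
  E (S m) A 1 = 1.
Proof.
  intros Hsum Hdiff.
  rewrite E_S, even_S_negb, S_INR.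
  destruct (Nat.even m); simpl negb.
  - replace (1 * Seven m A 1) with ((INR m + 1 + 1) / 2) by lra.
    now rewrite Rminus_diag, Rmult_0_l, exp_0.
  - replace (1 * Sodd m A 1) with ((INR m + 1) / 2) by lra.
    now rewrite Rminus_diag, Rmult_0_l, exp_0.
Qed.

Lemma Sodd_Seven_at_1 (n : nat) :
  Sodd n A 1 + Seven n A 1 = INR n + 1 /\
  Seven n A 1 - Sodd n A 1 = (if Nat.even n then 1 else 0).
Proof.
  induction n as [|m [Hsum Hdiff]].
  - unfold Sodd, Seven; simpl; split; ring.
  - pose proof (E_S_at_1 m Hsum Hdiff) as HE.
    rewrite Sodd_S, Seven_S, HE, S_INR, even_S_negb.
    destruct (Nat.even m); simpl in *; split; lra.
Qed.

Lemma E_at_1 (n : nat) : E n A 1 = 1.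
Proof.
  destruct n as [|m]; [reflexivity|].
  destruct (Sodd_Seven_at_1 m); now apply E_S_at_1.
Qed.

Definition dE (n : nat) : R := Derive (fun x => E n A x) 1.
Definition dSodd (n : nat) : R := Derive (fun x => Sodd n A x) 1.
Definition dSeven (n : nat) : R := Derive (fun x => Seven n A x) 1.

Lemma is_derive_E_S (m : nat) :
  ex_derive (fun x => Sodd m A x) 1 -> ex_derive (fun x => Seven m A x) 1 ->
  is_derive (fun x => E (S m) A x) 1
    (if Nat.even (S m) then A * (Sodd m A 1 + dSodd m)
     else - A * (Seven m A 1 + dSeven m)).
Proof.
  intros Hodd Heven.
  pose proof (E_at_1 (S m)) as HE1.
  rewrite E_S in HE1.
  destruct (Nat.even (S m)) eqn:Hpar.
  - apply (is_derive_ext (fun x => exp ((x * Sodd m A x - INR (S m) / 2) * A))).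
    { intro t; now rewrite E_S, Hpar. }
    apply is_derive_exp_root.
    { apply exp_inv; now rewrite exp_0. }
    auto_derive; [easy|].
    unfold dSodd; ring.
  - apply (is_derive_ext (fun x => exp (((INR (S m) + 1) / 2 - x * Seven m A x) * A))).
    { intro t; now rewrite E_S, Hpar. }
    apply is_derive_exp_root.
    { apply exp_inv; now rewrite exp_0. }
    auto_derive; [easy|].
    unfold dSeven; ring.
Qed.

Lemma ex_derive_sums (n : nat) :
  ex_derive (fun x => Sodd n A x) 1 /\ ex_derive (fun x => Seven n A x) 1.
Proof.
  induction n as [|m [Hodd Heven]].
  - unfold Sodd, Seven; simpl; split; apply ex_derive_const.
  - assert (HE : ex_derive (fun x => E (S m) A x) 1)
      by (eexists; exact (is_derive_E_S m Hodd Heven)).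
    destruct (Nat.even (S m)) eqn:Hpar; split.
    + apply (ex_derive_ext (fun x => Sodd m A x)); [|easy].
      intro t; now rewrite Sodd_S, Hpar.
    + apply (ex_derive_ext (fun x => Seven m A x + E (S m) A x)).
      { intro t; now rewrite Seven_S, Hpar. }
      now apply (ex_derive_plus (fun x => Seven m A x)).
    + apply (ex_derive_ext (fun x => Sodd m A x + E (S m) A x)).
      { intro t; now rewrite Sodd_S, Hpar. }
      now apply (ex_derive_plus (fun x => Sodd m A x)).
    + apply (ex_derive_ext (fun x => Seven m A x)); [|easy].
      intro t; now rewrite Seven_S, Hpar.
Qed.

Lemma dE_S (m : nat) :
  dE (S m) = if Nat.even (S m) then A * (Sodd m A 1 + dSodd m)
             else - A * (Seven m A 1 + dSeven m).
Proof.
  destruct (ex_derive_sums m) as [Hodd Heven].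
  exact (is_derive_unique _ _ _ (is_derive_E_S m Hodd Heven)).
Qed.

Lemma ex_derive_E (n : nat) : ex_derive (fun x => E n A x) 1.
Proof.
  destruct n as [|m]; [unfold E; simpl; apply ex_derive_const|].
  destruct (ex_derive_sums m) as [Hodd Heven].
  eexists; exact (is_derive_E_S m Hodd Heven).
Qed.

Lemma dSodd_S (m : nat) :
  dSodd (S m) = if Nat.even (S m) then dSodd m else dSodd m + dE (S m).
Proof.
  unfold dSodd, dE.
  destruct (Nat.even (S m)) eqn:Hpar.
  - apply Derive_ext; intro t; now rewrite Sodd_S, Hpar.
  - destruct (ex_derive_sums m) as [Hodd _].
    rewrite <- Derive_plus by (exact Hodd || apply ex_derive_E).
    apply Derive_ext; intro t; now rewrite Sodd_S, Hpar.
Qed.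

Lemma dSeven_S (m : nat) :
  dSeven (S m) = if Nat.even (S m) then dSeven m + dE (S m) else dSeven m.
Proof.
  unfold dSeven, dE.
  destruct (Nat.even (S m)) eqn:Hpar.
  - destruct (ex_derive_sums m) as [_ Heven].
    rewrite <- Derive_plus by (exact Heven || apply ex_derive_E).
    apply Derive_ext; intro t; now rewrite Seven_S, Hpar.
  - apply Derive_ext; intro t; now rewrite Seven_S, Hpar.
Qed.

Lemma Sodd_add_Seven_S (m : nat) (x : R) :
  Sodd (S m) A x + Seven (S m) A x = Sodd m A x + Seven m A x + E (S m) A x.
Proof. rewrite Sodd_S, Seven_S; destruct (Nat.even (S m)); ring. Qed.

Lemma dSodd_add_dSeven_S (m : nat) :
  dSodd (S m) + dSeven (S m) = dSodd m + dSeven m + dE (S m).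
Proof. rewrite dSodd_S, dSeven_S; destruct (Nat.even (S m)); ring. Qed.

Lemma is_derive_phi (k : nat) :
  is_derive (fun x => phi (S k) A x) 1
    (Sodd k A 1 + Seven k A 1 + dSodd k + dSeven k).
Proof.
  induction k as [|k IH].
  - unfold dSodd, dSeven, Sodd, Seven; simpl.
    rewrite !Derive_const.
    auto_derive; [easy|ring].
  - set (f := fun x => phi (S k) A x) in IH.
    apply (is_derive_ext (fun x => f x - 1 + x * E (S k) A x)); [reflexivity|].
    clearbody f.
    pose proof (Sodd_add_Seven_S k 1) as Hsum.
    pose proof (dSodd_add_dSeven_S k) as Hdsum.
    rewrite E_at_1 in Hsum.
    auto_derive.
    { split; [eexists; exact IH|]. split; [apply ex_derive_E|easy]. }
    replace (Derive (fun x => f x) 1) with (Sodd k A 1 + Seven k A 1 + dSodd k + dSeven k)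
      by (symmetry; now apply is_derive_unique).
    fold (dE (S k)); rewrite E_at_1.
    lra.
Qed.

Lemma p_S (k : nat) : p (S k) A = Sodd k A 1 + Seven k A 1 + dSodd k + dSeven k.
Proof. exact (is_derive_unique _ _ _ (is_derive_phi k)). Qed.

Lemma p_SS (k : nat) : p (S (S k)) A = p (S k) A + 1 + dE (S k).
Proof.
  pose proof (Sodd_add_Seven_S k 1) as Hsum.
  pose proof (dSodd_add_dSeven_S k) as Hdsum.
  rewrite E_at_1 in Hsum.
  rewrite !p_S; lra.
Qed.

Lemma dE_SS_sub_dE_S (k : nat) :
  dE (S (S k)) - dE (S k) = (-1) ^ S (S k) * A * p (S (S k)) A.
Proof.
  rewrite p_S, pow_m1_even, (dE_S (S k)), (dE_S k).
  rewrite Sodd_S, Seven_S, dSodd_S, dSeven_S.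
  change (Nat.even (S (S k))) with (Nat.even k).
  rewrite even_S_negb.
  destruct (Nat.even k); cbn [negb]; ring.
Qed.

Lemma p_recurrence (n : nat) :
  (3 <= n)%nat -> p n A = (2 - (-1) ^ n * A) * p (n - 1) A - p (n - 2) A.
Proof.
  intro Hn.
  destruct n as [|[|[|k]]]; try lia.
  replace (S (S (S k)) - 1)%nat with (S (S k)) by lia.
  replace (S (S (S k)) - 2)%nat with (S k) by lia.
  pose proof (p_SS k) as Hprev.
  pose proof (dE_SS_sub_dE_S k) as Hstep.
  rewrite (p_SS (S k)), <- tech_pow_Rmult.
  lra.
Qed.

End Derivatives.

Theorem theorem4p8 :
  (forall (n : nat) (A : R), (3 <= n)%nat -> Nat.even n = true -> A <> 2 ->
     p n A / (2 - A) = p (n - 1) A - p (n - 2) A / (2 - A)) /\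
  (forall (n : nat) (A : R), (3 <= n)%nat -> Nat.odd n = true -> A <> -2 ->
     p n A / (2 + A) = p (n - 1) A - p (n - 2) A / (2 + A)) /\
  (forall (n : nat) (A : R), (3 <= n)%nat ->
     p n A = (2 - (-1) ^ n * A) * p (n - 1) A - p (n - 2) A).
Proof.
  split; [|split].
  - intros n A Hn Heven HA.
    rewrite (p_recurrence A n Hn), pow_m1_even, Heven.
    field; lra.
  - intros n A Hn Hodd HA.
    rewrite <- Nat.negb_even in Hodd.
    rewrite (p_recurrence A n Hn), pow_m1_even.
    destruct (Nat.even n); [discriminate|].
    field; lra.
  - exact (fun n A => p_recurrence A n).
Qed.
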